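(* Let $u,v$ be generalized Stirling permutations and $s,t$ planar trees of the same degree. Then (1) if $u\le_{Pw}v$ then $\pi(u)\le_{PT}\pi(v)$; (2) if $s\le_{PT}t$ then $\iota(s)\le_{Pw}\iota(t)$.
   Context: A planar tree has linearly ordered children at each node, each node being a leaf or having $\ge2$ children (internal node); degree = number of leaves minus one. A generalized Stirling permutation (GSP) is a planar tree together with a bijection $\kappa$ from its internal nodes to $\{1,\dots,N\}$ ($N$ = number of internal nodes) increasing from each internal node to its internal children; $\pi(u)$ is its underlying planar tree. Its word $\mathbf w(u)$: a leaf has empty word; a node $x$ with children $c_1,\dots,c_k$ has word $\mathbf w(c_1)\kappa(x)\mathbf w(c_2)\cdots\kappa(x)\mathbf w(c_k)$. For each planar tree $t$ there is exactly one GSP with underlying tree $t$ whose word is $213$-avoiding (no $i<j<k$ with $w_k>w_i>w_j$); it is denoted $\iota(t)$. Planar weak order: for packed words, $w^{-1}(a)=\{p:w_p=a\}$, $\mathrm{iInv}(w)=\{(a,b):a<b,\ \min w^{-1}(a)>\max w^{-1}(b)\}$, $T_a(w)$ = $w$ with letters $a,a+1$ swapped; the order is the reflexive–transitive closure of: $u$ is covered by $w$ iff $u=T_a(w)$ and $|\mathrm{iInv}(w)|=|\mathrm{iInv}(u)|+1$. On GSPs, $u\le_{Pw}v$ iff $\mathbf w(u)\le\mathbf w(v)$. Planar Tamari order: if an internal node $x$ has children $c_1,\dots,c_{a-1},y$ ($a\ge2$) with $y$ internal having children $d_1,\dots,d_{b+1}$ ($b\ge1$), the left rotation at $x$ replaces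 the subtree at $x$ by a node with children $z,d_2,\dots,d_{b+1}$, where $z$ is a new node with children $c_1,\dots,c_{a-1},d_1$. $\le_{PT}$ is the reflexive–transitive closure of ''$t$ is a left rotation of $s$''. *)

From mathcomp Require Import all_boot.
From Stdlib Require Import Relations.
Set Implicit Arguments. Unset Strict Implicit. Unset Printing Implicit Defensive.

Inductive tree : Type := Leaf : tree | Node : seq tree -> tree.

Fixpoint planar (t : tree) : bool :=
  match t with Leaf => true | Node cs => (2 <= size cs) && all planar cs end.

Fixpoint nleaves (t : tree) : nat :=
  match t with Leaf => 1 | Node cs => sumn (map nleaves cs) end.

Definition degree (t : tree) : nat := (nleaves t).-1.

(** * Generalized Stirling permutations: planar trees whose internal nodes carry labels *)
Inductive ltree : Type := LLeaf : ltree | LNode : nat -> seq ltree -> ltree.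

Fixpoint pi_tree (u : ltree) : tree :=
  match u with LLeaf => Leaf | LNode _ cs => Node (map pi_tree cs) end.

Fixpoint labels (u : ltree) : seq nat :=
  match u with LLeaf => [::] | LNode k cs => k :: flatten (map labels cs) end.

Fixpoint increasing (u : ltree) : bool :=
  match u with
  | LLeaf => true
  | LNode k cs =>
      all (fun c => match c with LLeaf => true | LNode k' _ => k < k' end) cs
      && all increasing cs
  end.

(** u is a GSP: underlying tree is planar, kappa is a bijection from the
    internal nodes onto {1,...,N} (N = number of internal nodes), increasing. *)
Definition gsp (u : ltree) : Prop :=
  [/\ planar (pi_tree u),
      perm_eq (labels u) (iota 1 (size (labels u))) & increasing u].

Fixpoint word (u : ltree) : seq nat :=
  match u with
  | LLeaf => [::]
  | LNode k cs =>
      match cs with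
      | [::] => [::]
      | c :: cs' => word c ++ flatten (map (fun d => k :: word d) cs')
      end
  end.

Definition avoids213 (w : seq nat) : Prop :=
  forall i j k, i < j -> j < k -> k < size w ->
    ~ (nth 0 w j < nth 0 w i /\ nth 0 w i < nth 0 w k).

(** iota(t) is characterized as the (unique) GSP with underlying tree t whose
    word avoids 213. *)
Definition is_iota (t : tree) (u : ltree) : Prop :=
  gsp u /\ pi_tree u = t /\ avoids213 (word u).

Definition maxletter (w : seq nat) : nat := foldr maxn 0 w.

Definition packed (w : seq nat) : bool :=
  all (fun a => 0 < a) w && all (fun a => a \in w) (iota 1 (maxletter w)).

Definition positions (w : seq nat) (a : nat) : seq nat :=
  [seq p <- iota 0 (size w) | nth 0 w p == a].

Definition iinv_pair (w : seq nat) (a b : nat) : bool :=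
  (a < b) && (last 0 (positions w b) < head 0 (positions w a)).

Definition iInv (w : seq nat) : seq (nat * nat) :=
  [seq ab <- [seq (a, b) | a <- iota 1 (maxletter w), b <- iota 1 (maxletter w)]
     | iinv_pair w ab.1 ab.2].

Definition Tswap (a : nat) (w : seq nat) : seq nat :=
  map (fun x => if x == a then a.+1 else if x == a.+1 then a else x) w.

Definition pw_cover (u w : seq nat) : Prop :=
  [/\ packed u, packed w &
      exists a, u = Tswap a w /\ size (iInv w) = (size (iInv u)).+1].

Definition pw_le_word (u w : seq nat) : Prop := clos_refl_trans _ pw_cover u w.

Definition pw_le (u v : ltree) : Prop := pw_le_word (word u) (word v).

Inductive lrot : tree -> tree -> Prop :=
| lrot_root (cs : seq tree) (d : tree) (ds : seq tree) :
    0 < size cs -> 0 < size ds ->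
    lrot (Node (rcons cs (Node (d :: ds)))) (Node (Node (rcons cs d) :: ds))
| lrot_child (l : seq tree) (c c' : tree) (r : seq tree) :
    lrot c c' -> lrot (Node (l ++ c :: r)) (Node (l ++ c' :: r)).

Definition pt_le (s t : tree) : Prop := clos_refl_trans _ lrot s t.

From mathcomp Require Import all_boot zify.
From Stdlib Require Import Relations.
Set Implicit Arguments. Unset Strict Implicit. Unset Printing Implicit Defensive.

(** Part (1).  Cutting a word at its smallest letter and recursing on the
    blocks decodes a word into a planar tree ([tree_of_word]); on the word of
    an increasing labelled planar tree this recovers the underlying tree.  A
    cover [u <. w] of the planar weak order is [w = T_a u] where every [a]
    precedes every [a+1] in [u] (this is where inversions are counted).  Such
    a swap either acts blockwise below the minimum of the word, or, when the
    minimum is [a] itself, it is exactly a left rotation at the root of the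
    decoded tree.  Induction on the length gives [pi(u) <=PT pi(T_a u)].

    Part (2).  [iota(t)] is the explicit labelling [canon t 1] giving the root
    the smallest label and the children consecutive intervals from right to
    left; a 213-avoiding GSP is forced to be this labelling.  A left rotation
    changes the word of [canon] by a chain of such ordered swaps (the root
    label slides over the labels of the rotated subtrees), and ordered swaps
    of packed words are covers of the planar weak order. *)

Definition transp (a x : nat) : nat :=
  if x == a then a.+1 else if x == a.+1 then a else x.

Lemma TswapE a w : Tswap a w = map (transp a) w. Proof. by []. Qed.

Lemma transp_a a : transp a a = a.+1. Proof. by rewrite /transp eqxx. Qed.

Lemma transp_a1 a : transp a a.+1 = a.
Proof. by rewrite /transp ifN_eq ?eqxx //; lia. Qed.

Lemma transp_id a x : x != a -> x != a.+1 -> transp a x = x.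
Proof. by rewrite /transp => /negbTE -> /negbTE ->. Qed.

Lemma transpK a : involutive (transp a).
Proof. by move=> x; rewrite /transp; repeat case: eqP; lia. Qed.

Lemma transp_lt a m y : m < y -> (m = a -> y <> a.+1) -> transp a m < transp a y.
Proof.
rewrite /transp => lt ne.
case: (m =P a) => [ma|_]; case: (y =P a) => [ya|_]; case: (y =P a.+1) => [ya1|_] //;
  case: (m =P a.+1) => [ma1|_]; lia.
Qed.

Lemma transp_inj a : injective (transp a). Proof. exact: can_inj (transpK a). Qed.

Lemma transp_eq a x y : (transp a x == y) = (x == transp a y).
Proof. by apply/eqP/eqP => [<-|->]; rewrite transpK. Qed.

Lemma mem_Tswap a w z : (z \in Tswap a w) = (transp a z \in w).
Proof. by rewrite TswapE -{1}(transpK a z) (mem_map (@transp_inj a)). Qed.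

Lemma TswapK a : involutive (Tswap a).
Proof. by move=> w; rewrite !TswapE -map_comp (eq_map (transpK a)) map_id. Qed.

Lemma Tswap_id a w : a \notin w -> a.+1 \notin w -> Tswap a w = w.
Proof.
move=> na na1; rewrite TswapE; apply: map_id_in => x xw.
by apply: transp_id; [apply: contraNneq na|apply: contraNneq na1] => <-.
Qed.

Lemma Tswap_eqi a w : a \in w -> a.+1 \in w -> Tswap a w =i w.
Proof.
move=> h1 h2 z; rewrite mem_Tswap /transp.
by case: eqP => [->|_]; [|case: eqP => [->|_]]; rewrite ?h1 ?h2.
Qed.

(** [precedes b c s]: no occurrence of [b] in [s] follows an occurrence of
    [c].  A planar-weak-order cover [u <. T_a u] is exactly a transposition
    with [precedes a a.+1 u]. *)
Fixpoint precedes (b c : nat) (s : seq nat) : bool :=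
  if s is x :: s' then (if x == c then b \notin s' else precedes b c s')
  else true.

Lemma precedes_nob b c s : b \notin s -> precedes b c s.
Proof.
elim: s => //= x s IH; rewrite in_cons negb_or => /andP [_ h].
by case: ifP => _; last exact: IH.
Qed.

Lemma precedes_noc b c s : c \notin s -> precedes b c s.
Proof.
elim: s => //= x s IH; rewrite in_cons negb_or eq_sym => /andP [/negbTE -> h].
exact: IH.
Qed.

Lemma precedes_cat b c l r : precedes b c (l ++ r) =
  [&& precedes b c l, (c \in l) ==> (b \notin r) & precedes b c r].
Proof.
elim: l => //= x l IH; rewrite in_cons mem_cat negb_or IH [c == x]eq_sym.
case: (x =P c) => _ //=; case hb: (b \in r); rewrite ?andbF //=.
by rewrite (@precedes_nob b c r) ?hb.
Qed.

Lemma precedes_subseq b c s1 s2 :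
  subseq s1 s2 -> precedes b c s2 -> precedes b c s1.
Proof.
elim: s2 s1 => [|y s2 IH] [|x s1] //= hs.
case: eqP hs => [<-|_] hs; case: ifP => _ h.
- by apply: contra h => /(mem_subseq hs).
- exact: IH.
- by apply: (@precedes_nob b c (x :: s1)); apply: contra h => /(mem_subseq hs).
- exact: (IH (x :: s1)).
Qed.

Lemma precedes_Tswap a b c w :
  precedes b c (Tswap a w) = precedes (transp a b) (transp a c) w.
Proof.
elim: w => //= x w IH; rewrite transp_eq IH.
by rewrite -{1}(transpK a b) TswapE (mem_map (@transp_inj a)).
Qed.

Lemma precedes_antisym b c w : b \in w -> c \in w -> b != c ->
  precedes b c w -> precedes c b w -> False.
Proof.
elim: w => //= x w IH; rewrite !in_cons => hb hc ne.
case: (x =P c) => [exc|/eqP nxc].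
  subst x; rewrite (negbTE ne) /= in hb.
  by rewrite eq_sym (negbTE ne) => /negP.
case: (x =P b) => [exb|/eqP nxb].
  by subst x; rewrite eq_sym (negbTE ne) /= in hc => _ /negP.
rewrite eq_sym (negbTE nxb) in hb; rewrite eq_sym (negbTE nxc) in hc.
exact: IH.
Qed.

(** [join_at m [:: w1; ...; wk]] is [w1 m w2 m ... m wk]: the word of a node
    labelled [m] whose subtrees have words [w1, ..., wk]. *)
Definition join_at (m : nat) (ls : seq (seq nat)) : seq nat :=
  if ls is w :: ws then w ++ flatten (map (cons m) ws) else [::].

Lemma join_at_cons m w ws : join_at m (w :: ws) = w ++ flatten (map (cons m) ws).
Proof. by []. Qed.

Lemma word_join_at k cs : word (LNode k cs) = join_at k (map word cs).
Proof. by case: cs => //= c cs; rewrite -map_comp. Qed.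

Lemma mem_flatten_cons (m : nat) (ws : seq (seq nat)) z :
  (z \in flatten (map (cons m) ws)) = (ws != [::]) && (z == m) || (z \in flatten ws).
Proof.
elim: ws => //= w ws IH; rewrite in_cons !mem_cat IH.
by case: (z == m); case: (z \in w); case: (ws != [::]); case: (z \in flatten ws).
Qed.

Lemma mem_join_at m ls (z : nat) : z \in join_at m ls -> (z == m) || (z \in flatten ls).
Proof.
case: ls => //= w ws; rewrite !mem_cat mem_flatten_cons.
by case/orP => [->|/orP [/andP [_ ->]|->]]; rewrite ?orbT.
Qed.

Lemma mem_join_at_sep m ls : 1 < size ls -> m \in join_at m ls.
Proof. by case: ls => [|w [|w' ws]] //= _; rewrite mem_cat in_cons eqxx orbT. Qed.

Lemma mem_join_at_in m ls (l : seq nat) z : l \in ls -> z \in l -> z \in join_at m ls.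
Proof.
case: ls => //= w ws; rewrite in_cons mem_cat => /orP [/eqP ->|hl] hz.
  by rewrite hz.
by rewrite mem_flatten_cons; apply/orP; right; apply/orP; right; apply/flattenP; exists l.
Qed.

Lemma mem_join_atE m ls (z : nat) :
  1 < size ls -> (z \in join_at m ls) = (z == m) || (z \in flatten ls).
Proof.
move=> h; apply/idP/idP; first exact: mem_join_at.
by case/orP => [/eqP ->|/flattenP [l]]; [exact: mem_join_at_sep|exact: mem_join_at_in].
Qed.

Lemma join_at_rcons m ls w :
  ls != [::] -> join_at m (rcons ls w) = join_at m ls ++ m :: w.
Proof. by case: ls => //= l ls _; rewrite -cats1 map_cat flatten_cat /= cats0 catA. Qed.

Lemma join_at_rcons_cat m ls w w' :
  join_at m (rcons ls (w ++ w')) = join_at m (rcons ls w) ++ w'.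
Proof.
case: ls => [|l ls] /=; first by rewrite !cats0.
by rewrite -!cats1 !map_cat !flatten_cat /= !cats0 -!catA.
Qed.

(** The word-level shadow of a left rotation: the last block of an [m1]-node
    being an [m2]-node is the same word as the first block of an [m2]-node
    being an [m1]-node. *)
Lemma join_at_rot m1 m2 ls w ws :
  join_at m1 (rcons ls (join_at m2 (w :: ws))) = join_at m2 (join_at m1 (rcons ls w) :: ws).
Proof.
case: ls => [|l ls] /=; first by rewrite !cats0.
by rewrite -!cats1 !map_cat !flatten_cat /= !cats0 -!catA.
Qed.

Lemma map_join_at f m ls : map f (join_at m ls) = join_at (f m) (map (map f) ls).
Proof.
case: ls => //= w ws; rewrite map_cat map_flatten -!map_comp.
by congr (_ ++ flatten _); apply: eq_map.
Qed.

Lemma Tswap_join_at a m ls :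
  Tswap a (join_at m ls) = join_at (transp a m) (map (Tswap a) ls).
Proof. exact: map_join_at. Qed.

Lemma join_at_mid m ls1 w ls2 : join_at m (ls1 ++ w :: ls2) =
  flatten (map (rcons^~ m) ls1) ++ w ++ flatten (map (cons m) ls2).
Proof.
case: ls1 => [|l ls1] //=; elim: ls1 l => [|l' ls1 IH] l /=.
  by rewrite cats0 -cats1 -catA.
by rewrite IH -!cats1 -!catA.
Qed.

Fixpoint split_at (m : nat) (s : seq nat) : seq (seq nat) :=
  if s is x :: s' then
    if x == m then [::] :: split_at m s'
    else (x :: head [::] (split_at m s')) :: behead (split_at m s')
  else [:: [::]].

Lemma size_split_at m s : size (split_at m s) = (count_mem m s).+1.
Proof.
elim: s => //= x s IH; case: (x == m) => /=; first by rewrite IH.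
by rewrite size_behead IH.
Qed.

Lemma split_at_neq0 m s : split_at m s != [::].
Proof. by rewrite -size_eq0 size_split_at. Qed.

Lemma mem_split_at m s l : l \in split_at m s -> subseq l s && (m \notin l).
Proof.
elim: s l => [|x s IH] l; first by rewrite inE => /eqP ->.
rewrite [l \in _]/=; case: eqP => [xm|/eqP xm].
  rewrite in_cons => /orP [/eqP ->//|/IH /andP [h1 ->]].
  by rewrite (subseq_trans h1 (subseq_cons _ _)).
case E: (split_at m s) (split_at_neq0 m s) => [|h t] // _.
rewrite [l \in _]/= in_cons => /orP [/eqP ->|ht].
  have /IH /andP [h1 h2] : h \in split_at m s by rewrite E mem_head.
  by rewrite /= eqxx h1 in_cons negb_or eq_sym xm.
have /IH /andP [h1 ->] : l \in split_at m s by rewrite E in_cons ht orbT.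
by rewrite (subseq_trans h1 (subseq_cons _ _)).
Qed.

Lemma split_atK m : cancel (split_at m) (join_at m).
Proof.
move=> s; elim: s => //= x s IH.
case E: (split_at m s) (split_at_neq0 m s) IH => [|h t] //= _ IH.
by case: (x =P m) => [->|_] /=; rewrite -IH.
Qed.

Lemma split_at_cat m l s : m \notin l ->
  split_at m (l ++ s) = (l ++ head [::] (split_at m s)) :: behead (split_at m s).
Proof.
elim: l => [|x l IH] /=.
  by case: (split_at m s) (split_at_neq0 m s).
by rewrite in_cons negb_or eq_sym => /andP [/negbTE -> /IH ->].
Qed.

Lemma join_atK m (ls : seq (seq nat)) : ls != [::] -> (forall l, l \in ls -> m \notin l) ->
  split_at m (join_at m ls) = ls.
Proof.
case: ls => //= w ws _ h; rewrite split_at_cat ?h ?mem_head //.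
suff -> : split_at m (flatten (map (cons m) ws)) = [::] :: ws by rewrite cats0.
elim: ws h => //= w' ws IH h; rewrite eqxx split_at_cat ?IH /= ?cats0 //.
- by move=> l hl; apply: h; move: hl; rewrite !in_cons => /orP [->|->]; rewrite ?orbT.
- by apply: h; rewrite !in_cons eqxx orbT.
Qed.

Definition min_letter (s : seq nat) : nat := foldr minn (head 0 s) s.

Lemma foldr_minn_le x0 s y : y \in x0 :: s -> foldr minn x0 s <= y.
Proof.
elim: s => [|x s IH] /=; first by rewrite inE => /eqP ->.
rewrite !in_cons => /or3P [/eqP hy|/eqP ->|hy].
- by apply: leq_trans (geq_minr _ _) (IH _); rewrite hy mem_head.
- exact: geq_minl.
- by apply: leq_trans (geq_minr _ _) (IH _); rewrite in_cons hy orbT.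
Qed.

Lemma min_letter_le s y : y \in s -> min_letter s <= y.
Proof. by case: s => // x s hy; apply: foldr_minn_le; rewrite in_cons hy orbT. Qed.

Lemma foldr_minn_mem x0 s : foldr minn x0 s \in x0 :: s.
Proof.
elim: s => [|x s IH] /=; first exact: mem_head.
rewrite !in_cons; case: (leqP x (foldr minn x0 s)) => h.
  by rewrite eqxx orbT.
by move: IH; rewrite in_cons => /orP [->|->]; rewrite ?orbT.
Qed.

Lemma mem_min_letter s : s != [::] -> min_letter s \in s.
Proof.
case: s => // x s _; have := foldr_minn_mem x (x :: s).
by rewrite /min_letter /= !in_cons orbA orbb.
Qed.

Lemma min_letterE s m : m \in s -> (forall y, y \in s -> m <= y) -> min_letter s = m.
Proof.
move=> hm h; apply/eqP; rewrite eqn_leq min_letter_le // h //.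
by apply: mem_min_letter; apply: contraTneq hm => ->.
Qed.

(** Decoding a word into a planar tree: cut the word at its smallest letter
    and decode the blocks recursively.  [tree_of_word] inverts [word] on
    increasing labelled trees, which turns statements about words of GSPs
    into statements about their underlying planar trees. *)
Fixpoint tree_of_fuel (n : nat) (s : seq nat) : tree :=
  if n is n'.+1 then
    if s is [::] then Leaf
    else Node (map (tree_of_fuel n') (split_at (min_letter s) s))
  else Leaf.

Definition tree_of_word (s : seq nat) : tree := tree_of_fuel (size s) s.

Lemma size_block_lt s l : s != [::] -> l \in split_at (min_letter s) s ->
  size l < size s.
Proof.
move=> ne /mem_split_at /andP [hsub hm]; have [le eqc] := size_subseq_leqif hsub.
rewrite ltn_neqAle le andbT eqc; apply: contraNneq hm => ->.
exact: mem_min_letter.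
Qed.

Lemma tree_of_fuel_enough n m s : size s <= n -> size s <= m ->
  tree_of_fuel n s = tree_of_fuel m s.
Proof.
elim: n m s => [|n IH] [|m] [|x s] //= h1 h2; congr Node.
apply/eq_in_map => l hl; have := @size_block_lt (x :: s) l isT hl.
by move=> /= hlt; apply: IH; lia.
Qed.

Lemma tree_of_word_node s : s != [::] ->
  tree_of_word s = Node (map tree_of_word (split_at (min_letter s) s)).
Proof.
case: s => [|x s] // _; rewrite /tree_of_word /=; congr Node.
apply/eq_in_map => l hl; have := @size_block_lt (x :: s) l isT hl.
by move=> /= hlt; apply: tree_of_fuel_enough.
Qed.

Definition letters_above (m : nat) (ls : seq (seq nat)) : Prop :=
  forall l, l \in ls -> forall y, y \in l -> m < y.

Lemma tree_of_join m ls : 1 < size ls -> letters_above m ls ->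
  tree_of_word (join_at m ls) = Node (map tree_of_word ls).
Proof.
move=> hs hl; have hm := mem_join_at_sep m hs.
have ge y : y \in join_at m ls -> m <= y.
  by case/mem_join_at/orP => [/eqP ->//|/flattenP [l hl1 /(hl l hl1)/ltnW]].
rewrite tree_of_word_node; last by apply: contraTneq hm => ->.
rewrite (min_letterE hm ge) join_atK //.
- by case: (ls) hs.
- by move=> l /hl hlm; apply/negP => /hlm; rewrite ltnn.
Qed.

Lemma size_split_at_min s : s != [::] -> 1 < size (split_at (min_letter s) s).
Proof. by move=> ne; rewrite size_split_at ltnS -has_count has_pred1 mem_min_letter. Qed.

Lemma split_at_min_above s : letters_above (min_letter s) (split_at (min_letter s) s).
Proof.
move=> l /mem_split_at /andP [hsub hm] y hy; rewrite ltn_neqAle.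
rewrite min_letter_le ?(mem_subseq hsub hy) // andbT.
by apply: contraNneq hm => ->.
Qed.

Definition ltree_rect_in (P : ltree -> Prop) (HL : P LLeaf)
    (HN : forall k cs, (forall c, List.In c cs -> P c) -> P (LNode k cs)) :
    forall u, P u :=
  fix IH u := match u with
  | LLeaf => HL
  | LNode k cs => HN k cs ((fix go cs : forall c, List.In c cs -> P c :=
      match cs with
      | [::] => fun c (h : List.In c [::]) => False_ind (P c) h
      | c0 :: cs' => fun c (h : List.In c (c0 :: cs')) =>
          match h with
          | or_introl e => eq_ind c0 P (IH c0) c e
          | or_intror h' => go cs' c h'
          end
      end) cs)
  end.

Definition tree_rect_in (P : tree -> Prop) (HL : P Leaf)
    (HN : forall cs, (forall c, List.In c cs -> P c) -> P (Node cs)) :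
    forall t, P t :=
  fix IH t := match t with
  | Leaf => HL
  | Node cs => HN cs ((fix go cs : forall c, List.In c cs -> P c :=
      match cs with
      | [::] => fun c (h : List.In c [::]) => False_ind (P c) h
      | c0 :: cs' => fun c (h : List.In c (c0 :: cs')) =>
          match h with
          | or_introl e => eq_ind c0 P (IH c0) c e
          | or_intror h' => go cs' c h'
          end
      end) cs)
  end.

Lemma all_In (T : Type) (p : pred T) cs c : all p cs -> List.In c cs -> p c.
Proof. by elim: cs => //= x cs IH /andP [px pcs] [<-|h]; last exact: IH. Qed.

Lemma In_mem_map (T : Type) (U : eqType) (f : T -> U) cs c :
  List.In c cs -> f c \in map f cs.
Proof. by elim: cs => //= x cs IH [<-|/IH h]; rewrite in_cons ?eqxx ?h ?orbT. Qed.

Lemma mem_map_In (T : Type) (U : eqType) (f : T -> U) cs y :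
  y \in map f cs -> exists2 c, List.In c cs & y = f c.
Proof.
elim: cs => //= x cs IH; rewrite in_cons => /orP [/eqP ->|/IH [c hc ->]].
  by exists x; [left|].
by exists c; [right|].
Qed.

Lemma eq_map_In (T U : Type) (f g : T -> U) cs :
  (forall c, List.In c cs -> f c = g c) -> map f cs = map g cs.
Proof. by elim: cs => //= x cs IH h; rewrite h ?IH //; [move=> c hc; apply: h; right|left]. Qed.

Lemma planar_child k cs c :
  planar (pi_tree (LNode k cs)) -> List.In c cs -> planar (pi_tree c).
Proof. by case/andP => _ hp hc; apply: (all_In hp); apply: List.in_map. Qed.

Lemma mem_word u : planar (pi_tree u) -> word u =i labels u.
Proof.
elim/ltree_rect_in: u => [|k cs IH] // pu x; rewrite word_join_at /= in_cons.
have hsz : 1 < size (map word cs) by case/andP: pu; rewrite !size_map.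
rewrite mem_join_atE //; congr orb; apply/flattenP/flattenP => [] [l].
  by case/mem_map_In => c hc -> hx; exists (labels c); rewrite ?In_mem_map -?IH //;
    exact: planar_child pu hc.
by case/mem_map_In => c hc -> hx; exists (word c); rewrite ?In_mem_map ?IH //;
  exact: planar_child pu hc.
Qed.

Definition root_above (m : nat) (u : ltree) : bool :=
  if u is LNode k _ then m < k else true.

Lemma labels_above u m : increasing u -> root_above m u ->
  forall x, x \in labels u -> m < x.
Proof.
elim/ltree_rect_in: u m => [|k cs IH] m //= /andP [hr hi] hm x.
rewrite in_cons => /orP [/eqP ->//|/flattenP [l /mem_map_In [c hc ->] hx]].
by apply: ltn_trans hm (IH c hc k (all_In hi hc) (all_In hr hc) x hx).
Qed.

Lemma tree_of_word_word u : increasing u -> planar (pi_tree u) ->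
  tree_of_word (word u) = pi_tree u.
Proof.
elim/ltree_rect_in: u => [|k cs IH] // hi pu; rewrite word_join_at.
case/andP: (hi) => hr hic; case/andP: (pu) => hsz _.
rewrite tree_of_join ?size_map; first last.
- move=> l /mem_map_In [c hc ->] y.
  rewrite mem_word; last exact: planar_child pu hc.
  exact: labels_above (all_In hic hc) (all_In hr hc) y.
- by rewrite size_map in hsz.
rewrite -map_comp /=; congr Node; apply: eq_map_In => c hc /=.
by apply: IH => //; [exact: all_In hic hc|exact: planar_child pu hc].
Qed.

Lemma pt_le_child l c c' r : pt_le c c' ->
  pt_le (Node (l ++ c :: r)) (Node (l ++ c' :: r)).
Proof.
elim=> [x y h|x|x y z _ h1 _ h2]; last exact: rt_trans h1 h2.
- by apply: rt_step; apply: lrot_child.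
- exact: rt_refl.
Qed.

Lemma pt_le_node (T : eqType) (f g : T -> tree) (ls : seq T) :
  (forall l, l \in ls -> pt_le (f l) (g l)) ->
  pt_le (Node (map f ls)) (Node (map g ls)).
Proof.
suff gen pre : (forall l, l \in ls -> pt_le (f l) (g l)) ->
    pt_le (Node (pre ++ map f ls)) (Node (pre ++ map g ls)) by apply: (gen [::]).
elim: ls pre => [|l ls IH] pre h /=; first exact: rt_refl.
apply: rt_trans (pt_le_child pre (map f ls) (h l (mem_head _ _))) _.
rewrite -cat_rcons -[pre ++ g l :: _]cat_rcons; apply: IH => l' hl'.
by apply: h; rewrite in_cons hl' orbT.
Qed.

Lemma tree_of_Tswap_blocks a s : s != [::] ->
  ~~ ((min_letter s == a) && (a.+1 \in s)) ->
  tree_of_word (Tswap a s) =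
    Node (map (tree_of_word \o Tswap a) (split_at (min_letter s) s)).
Proof.
set m := min_letter s => ne hcase.
rewrite -{1}(split_atK m s) Tswap_join_at tree_of_join -?map_comp //.
  by rewrite size_map; exact: size_split_at_min.
move=> l /mapP [l0 hl0 ->] y; rewrite mem_Tswap => hy.
rewrite -(transpK a y); apply: transp_lt; first exact: split_at_min_above hl0 _ hy.
have /andP [hsub _] := mem_split_at hl0.
by move=> ema ey; move: hcase; rewrite -/m ema eqxx -ey (mem_subseq hsub hy).
Qed.

Lemma letters_above_cat m ls1 ls2 :
  letters_above m (ls1 ++ ls2) <-> letters_above m ls1 /\ letters_above m ls2.
Proof.
split=> [h|[h1 h2] l]; first by split=> l hl; apply: h; rewrite mem_cat hl ?orbT.
by rewrite mem_cat => /orP [/h1|/h2].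
Qed.

Lemma letters_above_weaken m n ls : m <= n -> letters_above n ls -> letters_above m ls.
Proof. by move=> le h l hl y /(h l hl); apply: leq_trans. Qed.

Lemma letters_above_join m n ls : m < n -> letters_above n ls ->
  letters_above m [:: join_at n ls].
Proof.
move=> lt h l; rewrite inE => /eqP -> y /mem_join_at /orP [/eqP -> //|/flattenP [l' hl hy]].
exact: ltn_trans lt (h l' hl y hy).
Qed.

Lemma Tswap_above a ls : letters_above a.+1 ls -> map (Tswap a) ls = ls.
Proof.
move=> h; apply: map_id_in => l hl.
by apply: Tswap_id; apply/negP => /(h l hl); rewrite ?ltnn // ltnNge leqnSn.
Qed.

Lemma lrot_Tswap_root a ls w0 ws : ls != [::] -> ws != [::] ->
  letters_above a.+1 (ls ++ w0 :: ws) ->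
  let s := join_at a (rcons ls (join_at a.+1 (w0 :: ws))) in
  lrot (tree_of_word s) (tree_of_word (Tswap a s)).
Proof.
move=> nls nws /letters_above_cat [hls hw] s.
have /(letters_above_cat _ [:: w0]) [hw0 hws] := hw.
have hlw : letters_above a.+1 (rcons ls w0) by rewrite -cats1; exact/letters_above_cat.
have sz (l : seq (seq nat)) x : l != [::] -> 1 < size (rcons l x).
  by case: l => // y l; rewrite size_rcons.
have Ts : Tswap a s = join_at a (join_at a.+1 (rcons ls w0) :: ws).
  rewrite Tswap_join_at transp_a map_rcons Tswap_join_at transp_a1 -join_at_rot.
  by rewrite (Tswap_above hls) (Tswap_above hw).
rewrite Ts /s !tree_of_join ?sz //.
- rewrite map_rcons tree_of_join //; last by case: (ws) nws.
  rewrite [map _ (_ :: _)]/= tree_of_join ?sz // map_rcons.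
  by apply: lrot_root; rewrite size_map lt0n size_eq0.
- by case: (ws) nws.
- rewrite -cat1s; apply/letters_above_cat; split; first exact: letters_above_join.
  exact: letters_above_weaken (leqnSn _) hws.
- rewrite -cats1; apply/letters_above_cat; split; last exact: letters_above_join.
  exact: letters_above_weaken (leqnSn _) hls.
Qed.

(** If the minimum of [s] is [a], [a.+1] occurs in [s], and every [a]
    precedes every [a.+1], then all the [a.+1]'s lie in the last block of [s]
    cut at [a], and swapping them is a left rotation at the root. *)
Lemma lrot_Tswap a s : min_letter s = a -> a.+1 \in s -> precedes a a.+1 s ->
  lrot (tree_of_word s) (tree_of_word (Tswap a s)).
Proof.
move=> ema ha1 hprec; have ne : s != [::] by case: (s) ha1.
have bl_above := @split_at_min_above s; have szbl := size_split_at_min ne.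
rewrite ema in bl_above szbl.
case/lastP E: (split_at a s) szbl bl_above => [|ls w] // szbl bl_above.
have nls : ls != [::] by move: szbl; rewrite size_rcons; case: (ls).
have es : s = join_at a ls ++ a :: w by rewrite -join_at_rcons // -E split_atK.
have na1 : a.+1 \notin join_at a ls.
  move: hprec; rewrite es precedes_cat => /and3P [_ /implyP h _].
  by apply/negP => /h; rewrite mem_head.
have ha1w : a.+1 \in w.
  by move: ha1; rewrite es mem_cat (negbTE na1) in_cons (gtn_eqF (ltnSn a)).
have above_w : letters_above a.+1 (split_at a.+1 w).
  move=> l /mem_split_at /andP [hsub hl] y hy; rewrite ltn_neqAle eq_sym.
  rewrite (bl_above w _ y (mem_subseq hsub hy)) ?andbT ?mem_rcons ?mem_head //.
  by apply: contraNneq hl => <-.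
case Ew: (split_at a.+1 w) (split_at_neq0 a.+1 w) above_w => [|w0 ws] // _ above_w.
have nws : ws != [::].
  have : 0 < count_mem a.+1 w by rewrite -has_count has_pred1.
  by move: (size_split_at a.+1 w); rewrite Ew /= => [[<-]]; case: (ws).
have -> : s = join_at a (rcons ls (join_at a.+1 (w0 :: ws))).
  by rewrite -Ew split_atK es join_at_rcons.
apply: lrot_Tswap_root => //; apply/letters_above_cat; split=> // l hl y hy.
rewrite ltn_neqAle eq_sym (bl_above l _ y hy) ?andbT; last by rewrite mem_rcons in_cons hl orbT.
by apply: contraNneq na1 => <-; apply: mem_join_at_in hl hy.
Qed.

(** Swapping [a] and [a.+1] in a word where every [a] precedes every [a.+1]
    moves its decoded tree up in the planar Tamari order: either the swap is
    a rotation at the root, or it acts on the root's blocks separately. *)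
Lemma pt_le_Tswap a s : precedes a a.+1 s ->
  pt_le (tree_of_word s) (tree_of_word (Tswap a s)).
Proof.
elim: {s}(size s) {-2}s (leqnn (size s)) => [|n IH] s hsz hprec.
  by move: hsz; rewrite leqn0 => /nilP ->; apply: rt_refl.
case: (eqVneq s [::]) => [->|ne]; first exact: rt_refl.
case: (boolP ((min_letter s == a) && (a.+1 \in s))) => [/andP [/eqP ema ha1]|hcase].
  by apply: rt_step; apply: lrot_Tswap.
rewrite tree_of_Tswap_blocks // tree_of_word_node //; apply: pt_le_node => l hl /=.
have /andP [hsub _] := mem_split_at hl.
apply: IH; last exact: precedes_subseq hsub hprec.
by rewrite -ltnS; apply: leq_trans hsz; apply: size_block_lt.
Qed.

(** Positions of letters: the condition [min w^-1(c) > max w^-1(b)] defining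
    inversions is the relation [precedes b c w]. *)
Lemma positions_cons x w c : positions (x :: w) c =
  if x == c then 0 :: map S (positions w c) else map S (positions w c).
Proof.
have iotaS m n : iota m.+1 n = map S (iota m n) by elim: n m => //= n IH m; rewrite IH.
by rewrite /positions /= iotaS filter_map; case: ifP.
Qed.

Lemma positions_Tswap a w c : positions (Tswap a w) c = positions w (transp a c).
Proof.
elim: w => // x w IH.
by rewrite TswapE /= -TswapE !positions_cons IH transp_eq.
Qed.

Lemma positions_eq0 w c : (positions w c == [::]) = (c \notin w).
Proof.
elim: w => //= x w IH; rewrite positions_cons in_cons negb_or [c == x]eq_sym.
by case: (x == c) => //=; rewrite -IH; case: (positions w c).
Qed.

Lemma positions_precedes b c w : b != c -> b \in w -> c \in w ->
  (last 0 (positions w b) < head 0 (positions w c)) = precedes b c w.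
Proof.
move=> ne; elim: w => //= x w IH; rewrite !positions_cons !in_cons.
have headS (l : seq nat) : l != [::] -> head 0 (map S l) = (head 0 l).+1 by case: l.
have lastS (l : seq nat) : l != [::] -> last 0 (map S l) = (last 0 l).+1.
  by case: l => //= p l _; rewrite last_map.
case: (x =P c) => [exc|/eqP nxc].
  by subst x; rewrite (negbTE ne) /= ltn0 => -> _.
rewrite [c == x]eq_sym (negbTE nxc) /= => hb hc.
have pc : positions w c != [::] by rewrite positions_eq0 hc.
case: (x =P b) => [exb|/eqP nxb]; last first.
  rewrite eq_sym (negbTE nxb) /= in hb.
  by rewrite headS // lastS ?positions_eq0 ?hb // ltnS IH.
subst x; rewrite headS //; case: (boolP (b \in w)) => [bw|nbw].
  by rewrite /= lastS ?positions_eq0 ?bw // ltnS IH.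
by rewrite precedes_nob //; move: nbw; rewrite -positions_eq0 => /eqP ->.
Qed.

Lemma iinv_pair_succ a w : a \in w -> a.+1 \in w ->
  iinv_pair w a a.+1 = precedes a.+1 a w.
Proof. by move=> h0 h1; rewrite /iinv_pair ltnSn positions_precedes ?gtn_eqF. Qed.

Lemma maxletterE w : maxletter w = \max_(x <- w) x.
Proof. by elim: w => [|x w IH]; rewrite ?big_nil ?big_cons //= -IH. Qed.

Lemma maxletter_ge w x : x \in w -> x <= maxletter w.
Proof. by rewrite maxletterE => /leq_bigmax_seq; apply. Qed.

Lemma maxletter_le w m : (forall x, x \in w -> x <= m) -> maxletter w <= m.
Proof. by move=> h; rewrite maxletterE; apply/bigmax_leqP_seq => x /h. Qed.

Lemma maxletter_eqi w1 w2 : w1 =i w2 -> maxletter w1 = maxletter w2.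
Proof.
move=> e; apply/eqP; rewrite eqn_leq !maxletter_le // => x hx; apply: maxletter_ge.
  by rewrite e.
by rewrite -e.
Qed.

Lemma packed_eqi w1 w2 : w1 =i w2 -> packed w1 = packed w2.
Proof.
move=> e; rewrite /packed (eq_all_r e) (maxletter_eqi e).
by congr andb; apply: eq_all => a /=; rewrite e.
Qed.

Lemma packed_pos w x : packed w -> x \in w -> 0 < x.
Proof. by case/andP => /allP h _ /h. Qed.

Lemma packed_range w n : (forall x, (x \in w) = (0 < x <= n)) -> packed w.
Proof.
move=> h; apply/andP; split; first by apply/allP => x; rewrite h => /andP [].
apply/allP => y; rewrite mem_iota h add1n ltnS => /andP [-> /leq_trans]; apply.
by apply: maxletter_le => x; rewrite h => /andP [].
Qed.

Lemma size_iInv w : size (iInv w) =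
  \sum_(p <- iota 1 (maxletter w)) \sum_(q <- iota 1 (maxletter w)) iinv_pair w p q.
Proof.
rewrite /iInv size_filter -sum1_count big_mkcond big_allpairs.
by apply: eq_bigr => p _; apply: eq_bigr => q _; case: iinv_pair.
Qed.

Lemma sum_delta (r : seq nat) u v c : uniq r -> u \in r -> v \in r ->
  \sum_(p <- r) \sum_(q <- r) ((p == u) && (q == v)) * c = c.
Proof.
move=> ur hu hv.
have sum1 t (F : nat -> nat) : \sum_(q <- r) (q == t) * F q = count_mem t r * F t.
  elim: (r) => [|x s IH]; rewrite ?big_nil ?big_cons //= IH.
  by case: eqP => [->|_]; rewrite ?mul1n ?mul0n ?add0n // mulnDl mul1n.
rewrite (eq_bigr (fun p => (p == u) * (\sum_(q <- r) (q == v) * c))); last first.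
  by move=> p _; rewrite big_distrr /=; apply: eq_bigr => q _; rewrite -mulnb mulnA.
by rewrite sum1 sum1 !count_uniq_mem // hu hv !mul1n.
Qed.

Lemma sum_perm (r : seq nat) (F : nat -> nat) f : perm_eq (map f r) r ->
  \sum_(p <- r) F (f p) = \sum_(p <- r) F p.
Proof. by move=> h; rewrite -(big_map f xpredT F); apply: perm_big. Qed.

Lemma perm_transp a M : 0 < a -> a < M -> perm_eq (map (transp a) (iota 1 M)) (iota 1 M).
Proof.
move=> h1 h2; apply: uniq_perm; rewrite ?(map_inj_uniq (@transp_inj a)) ?iota_uniq // => x.
rewrite -{1}(transpK a x) (mem_map (@transp_inj a)) !mem_iota /transp.
by repeat case: eqP; lia.
Qed.

Lemma transp_ltE a p q :
  ~~ ((p == a) && (q == a.+1)) -> ~~ ((p == a.+1) && (q == a)) ->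
  (transp a p < transp a q) = (p < q).
Proof.
rewrite /transp.
by case: (p =P a); case: (q =P a); case: (p =P a.+1); case: (q =P a.+1); lia.
Qed.

(** Pairwise effect of [Tswap a] on inversions: only the pair [(a, a.+1)]
    changes its status. *)
Lemma iinv_pair_Tswap a y p q :
  iinv_pair (Tswap a y) p q + ((p == a.+1) && (q == a)) * iinv_pair y a a.+1 =
  iinv_pair y (transp a p) (transp a q) +
    ((p == a) && (q == a.+1)) * iinv_pair (Tswap a y) a a.+1.
Proof.
rewrite /iinv_pair !positions_Tswap.
have [/andP [/eqP -> /eqP ->]|h1] := boolP ((p == a) && (q == a.+1)); last first.
  have [/andP [/eqP -> /eqP ->]|h2] := boolP ((p == a.+1) && (q == a)).
    by rewrite transp_a transp_a1 ltnSn (ltnNge a.+1 a) leqnSn /= mul0n mul1n addn0.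
  by rewrite transp_ltE // !mul0n.
rewrite transp_a transp_a1 ltnSn (ltnNge a.+1 a) leqnSn /= (ltn_eqF (ltnSn a)).
by rewrite mul0n mul1n addn0.
Qed.

(** Summing [iinv_pair_Tswap] over the alphabet, which [transp a] permutes:
    [Tswap a] changes the number of inversions only through the pair
    [(a, a.+1)]. *)
Lemma size_iInv_Tswap a y : packed y -> a \in y -> a.+1 \in y ->
  size (iInv (Tswap a y)) + iinv_pair y a a.+1 =
  size (iInv y) + iinv_pair (Tswap a y) a a.+1.
Proof.
move=> hpk h0 h1; have ha : 0 < a := packed_pos hpk h0.
rewrite !size_iInv (maxletter_eqi (Tswap_eqi h0 h1)).
set r := iota 1 (maxletter y).
have ur : uniq r := iota_uniq _ _.
have r0 : a \in r by rewrite mem_iota ha add1n ltnS (leq_trans (leqnSn a) (maxletter_ge h1)).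
have r1 : a.+1 \in r by rewrite mem_iota /= add1n ltnS (maxletter_ge h1).
have hp : perm_eq (map (transp a) r) r.
  by apply: perm_transp => //; apply: maxletter_ge h1.
have reindex : \sum_(p <- r) \sum_(q <- r) iinv_pair y (transp a p) (transp a q) =
    \sum_(p <- r) \sum_(q <- r) iinv_pair y p q.
  rewrite (eq_bigr (fun p => \sum_(q <- r) iinv_pair y (transp a p) q)).
    exact: (sum_perm (fun p => \sum_(q <- r) iinv_pair y p q) hp).
  by move=> p _; exact: (sum_perm (fun q => iinv_pair y (transp a p) q) hp).
have split2 (F G : nat -> nat -> nat) :
    \sum_(p <- r) \sum_(q <- r) (F p q + G p q) =
    \sum_(p <- r) \sum_(q <- r) F p q + \sum_(p <- r) \sum_(q <- r) G p q.
  by rewrite -big_split; apply: eq_bigr => p _; rewrite big_split.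
have pointwise :
  \sum_(p <- r) \sum_(q <- r)
     (iinv_pair (Tswap a y) p q + ((p == a.+1) && (q == a)) * iinv_pair y a a.+1) =
  \sum_(p <- r) \sum_(q <- r) (iinv_pair y (transp a p) (transp a q) +
     ((p == a) && (q == a.+1)) * iinv_pair (Tswap a y) a a.+1).
  by apply: eq_bigr => p _; apply: eq_bigr => q _; apply: iinv_pair_Tswap.
by move: pointwise; rewrite !split2 reindex !sum_delta.
Qed.

Lemma pw_cover_precedes x y : pw_cover x y ->
  exists a, precedes a a.+1 x /\ y = Tswap a x.
Proof.
case=> px py [a [ex hs]]; exists a; split; last by rewrite ex TswapK.
rewrite ex precedes_Tswap transp_a transp_a1.
have [h1|h1] := boolP (a.+1 \in y); last exact: precedes_nob.
have [h0|h0] := boolP (a \in y); last exact: precedes_noc.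
rewrite -iinv_pair_succ //; have := size_iInv_Tswap py h0 h1.
by rewrite -ex hs; case: iinv_pair; case: iinv_pair => //=; lia.
Qed.

Theorem pw_le_pt_le u v : gsp u -> gsp v -> pw_le u v -> pt_le (pi_tree u) (pi_tree v).
Proof.
case=> pu _ iu [pv _ iv]; rewrite -(tree_of_word_word iu pu) -(tree_of_word_word iv pv).
elim=> [x y /pw_cover_precedes [a [hs ->]]|x|x y z _ h1 _ h2].
- exact: pt_le_Tswap.
- exact: rt_refl.
- exact: rt_trans h1 h2.
Qed.

(** [ordered_swap x y]: [y = T_a x] for letters [a], [a.+1] of [x] such that
    every [a] precedes every [a.+1] in [x].  On packed words these steps are
    exactly the covers of the planar weak order. *)
Definition ordered_swap (x y : seq nat) : Prop :=
  exists a, [/\ a \in x, a.+1 \in x, precedes a a.+1 x & y = Tswap a x].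

Lemma ordered_swap_eqi x y : ordered_swap x y -> y =i x.
Proof. by case=> a [h0 h1 _ ->]; apply: Tswap_eqi. Qed.

Lemma ordered_swaps_eqi x y : clos_refl_trans _ ordered_swap x y -> y =i x.
Proof.
elim=> [a b /ordered_swap_eqi //|//|a b c _ h1 _ h2 z].
by rewrite h2 h1.
Qed.

Lemma ordered_swap_cover x y : packed x -> ordered_swap x y -> pw_cover x y.
Proof.
move=> px hxy; have ey := ordered_swap_eqi hxy.
case: hxy => a [h0 h1 hs ey']; split; first exact: px.
  by rewrite (packed_eqi ey).
exists a; split; first by rewrite ey' TswapK.
have := size_iInv_Tswap px h0 h1; rewrite -ey' !iinv_pair_succ ?ey //.
have -> : precedes a.+1 a y by rewrite ey' precedes_Tswap transp_a transp_a1.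
have -> : precedes a.+1 a x = false.
  by apply/negP => hs'; apply: (precedes_antisym h0 h1 _ hs hs'); rewrite ltn_eqF.
by rewrite addn0 addn1.
Qed.

Lemma ordered_swaps_pw_le x y : packed x ->
  clos_refl_trans _ ordered_swap x y -> pw_le_word x y.
Proof.
move=> px h; elim: h px => [a b h|a|a b c h h1 _ h2] pa.
- by apply: rt_step; apply: ordered_swap_cover.
- exact: rt_refl.
- apply: rt_trans (h1 pa) (h2 _).
  by rewrite (packed_eqi (ordered_swaps_eqi h)).
Qed.

Lemma ordered_swap_cat P Q X Y : ordered_swap X Y ->
  (forall z, z \in X -> (z \notin P) && (z \notin Q)) ->
  ordered_swap (P ++ X ++ Q) (P ++ Y ++ Q).
Proof.
case=> a [h0 h1 hs ->] hd.
have /andP [p0 q0] := hd a h0; have /andP [p1 q1] := hd a.+1 h1.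
exists a; split; rewrite ?mem_cat ?h0 ?h1 ?orbT //.
  by rewrite !precedes_cat hs (negbTE p1) precedes_noc // precedes_nob // q0 implybT.
by rewrite !TswapE !map_cat -!TswapE (Tswap_id p0 p1) (Tswap_id q0 q1).
Qed.

Lemma ordered_swaps_cat P Q X Y : clos_refl_trans _ ordered_swap X Y ->
  (forall z, z \in X -> (z \notin P) && (z \notin Q)) ->
  clos_refl_trans _ ordered_swap (P ++ X ++ Q) (P ++ Y ++ Q).
Proof.
elim=> [a b h|a|a b c h h1 _ h2] hd.
- by apply: rt_step; apply: ordered_swap_cat.
- exact: rt_refl.
- by apply: rt_trans (h1 hd) (h2 _) => z; rewrite (ordered_swaps_eqi h); apply: hd.
Qed.

Fixpoint ninternal (t : tree) : nat :=
  if t is Node cs then (sumn (map ninternal cs)).+1 else 0.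

Definition ninternal_forest (cs : seq tree) : nat := sumn (map ninternal cs).

(** The canonical labelling [canon t b] of a planar tree [t] by the labels
    [b, b + 1, ...]: the root gets the smallest label and the children receive
    consecutive intervals of labels from right to left.  For [b = 1] this is
    the 213-avoiding GSP [iota(t)]. *)
Fixpoint canon (t : tree) (b : nat) : ltree :=
  if t is Node cs then
    LNode b ((fix forest (cs : seq tree) (c : nat) : seq ltree :=
      if cs is x :: cs' then canon x (c + sumn (map ninternal cs')) :: forest cs' c
      else [::]) cs b.+1)
  else LLeaf.

Fixpoint canon_forest (cs : seq tree) (c : nat) : seq ltree :=
  if cs is x :: cs' then canon x (c + ninternal_forest cs') :: canon_forest cs' c
  else [::].

Lemma canon_node cs b : canon (Node cs) b = LNode b (canon_forest cs b.+1).
Proof. by []. Qed.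

Lemma canon_forest_cons x cs c :
  canon_forest (x :: cs) c = canon x (c + ninternal_forest cs) :: canon_forest cs c.
Proof. by []. Qed.

Lemma canon_forest1 x c : canon_forest [:: x] c = [:: canon x c].
Proof. by rewrite canon_forest_cons addn0. Qed.

Lemma ninternal_forest_cat l r :
  ninternal_forest (l ++ r) = ninternal_forest l + ninternal_forest r.
Proof. by rewrite /ninternal_forest map_cat sumn_cat. Qed.

Lemma canon_forest_cat cs1 cs2 c :
  canon_forest (cs1 ++ cs2) c =
  canon_forest cs1 (c + ninternal_forest cs2) ++ canon_forest cs2 c.
Proof.
elim: cs1 => //= x cs1 ->; rewrite ninternal_forest_cat addnA.
by congr (canon x _ :: _); rewrite addnAC.
Qed.

Lemma size_canon_forest cs c : size (canon_forest cs c) = size cs.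
Proof. by elim: cs => //= x cs ->. Qed.

Lemma word_canon_shift t c : word (canon t c.+1) = map S (word (canon t c)).
Proof.
elim/tree_rect_in: t c => [|cs IH] c //; rewrite !canon_node !word_join_at map_join_at.
congr join_at; rewrite -map_comp; elim: cs IH c.+1 => //= x cs IHcs IH c'.
by rewrite addSn IH ?IHcs //; [move=> y hy; apply: IH; right|left].
Qed.

Lemma word_canon_forest_shift cs c :
  map word (canon_forest cs c.+1) = map (map S) (map word (canon_forest cs c)).
Proof. by elim: cs => //= x cs ->; rewrite addSn word_canon_shift. Qed.

Lemma mem_word_canon t : planar t ->
  forall c x, (x \in word (canon t c)) = (c <= x < c + ninternal t).
Proof.
elim/tree_rect_in: t => [|cs IH]; first by move=> _ c x; rewrite in_nil /=; lia.
case/andP => hsz hp c x; rewrite canon_node word_join_at mem_join_atE; last first.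
  by rewrite size_map size_canon_forest.
suff -> : x \in flatten (map word (canon_forest cs c.+1)) =
    (c.+1 <= x < c.+1 + ninternal_forest cs).
  by rewrite /ninternal_forest /=; case: eqP; lia.
elim: cs IH hp c.+1 {hsz} => [|y l IHl] IH /=.
  by move=> _ c'; rewrite in_nil /ninternal_forest /=; lia.
case/andP => py pl c'; rewrite mem_cat (IH y (or_introl erefl)) //.
rewrite (IHl (fun z hz => IH z (or_intror hz))) // /ninternal_forest /=; lia.
Qed.

Lemma mem_word_canon_forest cs c x : all planar cs ->
  (x \in flatten (map word (canon_forest cs c))) = (c <= x < c + ninternal_forest cs).
Proof.
elim: cs => [|y l IH] /=; first by move=> _; rewrite in_nil addn0; case: leqP.
case/andP => py pl; rewrite mem_cat mem_word_canon // IH // /ninternal_forest /=; lia.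
Qed.

Lemma lrot_ninternal s t : lrot s t -> ninternal s = ninternal t.
Proof.
elim=> [cs d ds _ _|l c c' r _ IH] /=; last by rewrite !map_cat !sumn_cat /= IH.
rewrite -!cats1 !map_cat !sumn_cat /=; lia.
Qed.

Lemma lrot_planar s t : lrot s t -> planar s -> planar t.
Proof.
elim=> [cs d ds h1 h2|l c c' r _ IH].
  rewrite /= -!cats1 all_cat /= => /andP [_ /andP [hc /andP [/andP [_ /andP [hd hds]] _]]].
  rewrite all_cat hc /= hd hds size_cat /= !andbT; apply/andP; split; lia.
rewrite /= !size_cat !all_cat /= => /andP [hs /andP [hl /andP [hc hr]]].
by rewrite hs hl hr IH.
Qed.

Lemma pt_le_planar s t : pt_le s t -> planar s -> planar t.
Proof.
elim=> [x y /lrot_planar //|//|x y z _ h1 _ h2 px].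
exact: h2 (h1 px).
Qed.

Definition shift_from (b j x : nat) : nat := if x < b + j then x else x.+1.

Lemma transp_shift_from b j x : transp (b + j) (shift_from b j x) = shift_from b j.+1 x.
Proof. by rewrite /transp /shift_from; repeat (case: ifP || case: eqP); lia. Qed.

(** The sliding chain: a separator [b] followed by a factor [map S F] whose
    letters fill the interval [[b + 1, b + n + 1]] reaches, by [n + 1] ordered
    swaps, the separator [b + n + 1] followed by [F]; the swapped letter
    [b + j] moves from the separators into [F] at the [j]-th step. *)
Lemma ordered_swaps_slide b n (L : seq (seq nat)) (F : seq nat) :
  1 < size L -> letters_above (b + n.+1) L ->
  (forall x, x \in F -> b <= x <= b + n) -> (forall j, j <= n -> b + j \in F) ->
  clos_refl_trans _ ordered_swap (join_at b L ++ map S F) (join_at (b + n.+1) L ++ F).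
Proof.
move=> szL hL hF inF.
pose W j := join_at (b + j) L ++ map (shift_from b j) F.
have step j : j <= n -> ordered_swap (W j) (W j.+1).
  move=> hj; exists (b + j); split.
  - by rewrite mem_cat mem_join_at_sep.
  - by rewrite mem_cat -[(b + j).+1](_ : shift_from b j (b + j) = _) ?map_f ?orbT ?inF //;
      rewrite /shift_from ltnn.
  - have na1 : (b + j).+1 \notin join_at (b + j) L.
      apply/negP => /mem_join_at /orP [/eqP|/flattenP [l hl hx]]; first lia.
      by have := hL l hl _ hx; lia.
    rewrite precedes_cat precedes_noc // (negbTE na1) /= precedes_nob //.
    by apply/negP => /mapP [x _]; rewrite /shift_from; case: ifP; lia.
  - rewrite /W TswapE map_cat -TswapE Tswap_join_at transp_a addnS.
    rewrite (Tswap_above (letters_above_weaken _ hL)); last lia.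
    by congr (_ ++ _); rewrite -map_comp; apply: eq_map => x /=; rewrite transp_shift_from.
have chain j : j <= n.+1 -> clos_refl_trans _ ordered_swap (W 0) (W j).
  elim: j => [|j IH] hj; first exact: rt_refl.
  by apply: rt_trans (IH (ltnW hj)) (rt_step _ _ _ _ (step j hj)).
have -> : join_at b L ++ map S F = W 0.
  rewrite /W addn0; congr (_ ++ _); apply/eq_in_map => x /hF.
  by rewrite /shift_from addn0; case: ifP; lia.
have -> : join_at (b + n.+1) L ++ F = W n.+1.
  rewrite /W; congr (_ ++ _); apply/esym/map_id_in => x /hF.
  by rewrite /shift_from; case: ifP; lia.
exact: chain.
Qed.

Section RootRotation.
Variables (cs : seq tree) (d : tree) (ds : seq tree) (b : nat).

Let N := ninternal_forest ds.
Let Cw := map word (canon_forest cs (b.+2 + ninternal d + N)).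
Let Dw := word (canon d (b.+2 + N)).
Let F := flatten (map (cons b) (map word (canon_forest ds b.+1))).

Lemma word_canon_rot_source :
  word (canon (Node (rcons cs (Node (d :: ds)))) b) = join_at b (rcons Cw Dw) ++ map S F.
Proof.
rewrite canon_node word_join_at -cats1 canon_forest_cat map_cat canon_forest1 map_cons.
rewrite canon_node word_join_at canon_forest_cons map_cons join_at_cons.
rewrite word_canon_forest_shift cats1.
have -> : b.+1 + ninternal_forest [:: Node (d :: ds)] = b.+2 + ninternal d + N.
  by rewrite /N /ninternal_forest /=; lia.
rewrite join_at_rcons_cat -/Cw -/Dw /F; congr (_ ++ _).
by rewrite map_flatten -!map_comp; congr flatten; apply: eq_map.
Qed.

Lemma word_canon_rot_target :
  word (canon (Node (Node (rcons cs d) :: ds)) b) = join_at (b + N.+1) (rcons Cw Dw) ++ F.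
Proof.
rewrite canon_node word_join_at canon_forest_cons map_cons join_at_cons.
rewrite canon_node word_join_at -cats1 canon_forest_cat map_cat canon_forest1 map_cons cats1.
have -> : (b.+1 + ninternal_forest ds).+1 + ninternal_forest [:: d] = b.+2 + ninternal d + N.
  by rewrite /N /ninternal_forest /=; lia.
have -> : (b.+1 + ninternal_forest ds).+1 = b.+2 + N by rewrite /N; lia.
by have -> : b.+1 + ninternal_forest ds = b + N.+1 by rewrite /N; lia.
Qed.

(** A left rotation at the root is realized on the canonical words by a
    chain of ordered swaps: the root label slides over the labels of [ds]. *)
Lemma ordered_swaps_rot_root : 0 < size cs -> 0 < size ds ->
  all planar cs -> planar d -> all planar ds ->
  clos_refl_trans _ ordered_swap (word (canon (Node (rcons cs (Node (d :: ds)))) b))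
                                 (word (canon (Node (Node (rcons cs d) :: ds)) b)).
Proof.
move=> h1 h2 pc pd pds; rewrite word_canon_rot_source word_canon_rot_target.
have neE : map word (canon_forest ds b.+1) != [::].
  by rewrite -size_eq0 size_map size_canon_forest -lt0n.
apply: ordered_swaps_slide.
- by rewrite size_rcons /Cw size_map size_canon_forest.
- move=> l; rewrite mem_rcons in_cons => /orP [/eqP ->|hl] x.
    by rewrite /Dw mem_word_canon //; lia.
  move=> hx; have : x \in flatten Cw by apply/flattenP; exists l.
  by rewrite /Cw mem_word_canon_forest //; lia.
- move=> x; rewrite /F mem_flatten_cons => /orP [/andP [_ /eqP ->]|]; first lia.
  by rewrite mem_word_canon_forest // /N; lia.
- move=> j hj; rewrite /F mem_flatten_cons; case: (posnP j) => [->|hj0].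
    by rewrite neE addn0 eqxx.
  by rewrite mem_word_canon_forest // /N; apply/orP; right; lia.
Qed.

End RootRotation.

Lemma mem_flatten_rcons (m : nat) (ls : seq (seq nat)) z :
  z \in flatten (map (rcons^~ m) ls) -> (z == m) || (z \in flatten ls).
Proof.
elim: ls => //= l ls IH; rewrite !mem_cat mem_rcons in_cons.
by case/orP => [/orP [->|->]|/IH /orP [->|->]]; rewrite ?orbT.
Qed.

(** Every left rotation is realized on the canonical words by a chain of
    ordered swaps: at the root by [ordered_swaps_rot_root], and below the
    root inside the factor of the rotated child, whose letters form an
    interval disjoint from the rest of the word. *)
Lemma ordered_swaps_lrot s t : lrot s t -> planar s -> forall b,
  clos_refl_trans _ ordered_swap (word (canon s b)) (word (canon t b)).
Proof.
elim=> [cs d ds h1 h2|l c c' r hr IH] ps b.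
  case/andP: ps => _; rewrite all_rcons => /andP [/andP [_ /andP [hd hds]] hc].
  exact: ordered_swaps_rot_root.
case/andP: ps => _; rewrite all_cat => /andP [pl /andP [pc pr]].
rewrite !canon_node !word_join_at !canon_forest_cat !canon_forest_cons !map_cat.
rewrite !map_cons !join_at_mid /ninternal_forest /= -(lrot_ninternal hr).
apply: ordered_swaps_cat; first exact: IH.
move=> z; rewrite mem_word_canon // => hz; apply/andP; split; apply/negP.
  case/mem_flatten_rcons/orP => [/eqP|]; first lia.
  by rewrite mem_word_canon_forest // /ninternal_forest; lia.
rewrite mem_flatten_cons => /orP [/andP [_ /eqP]|]; first lia.
by rewrite mem_word_canon_forest // /ninternal_forest; lia.
Qed.

Lemma ordered_swaps_pt_le s t : pt_le s t -> planar s -> forall b,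
  clos_refl_trans _ ordered_swap (word (canon s b)) (word (canon t b)).
Proof.
elim=> [x y /ordered_swaps_lrot //|x _ b|x y z hxy h1 _ h2 px b]; first exact: rt_refl.
exact: rt_trans (h1 px b) (h2 (pt_le_planar hxy px) b).
Qed.

Lemma avoids213_infix P X Q : avoids213 (P ++ X ++ Q) -> avoids213 X.
Proof.
move=> h i j k hij hjk hk.
have e n : n < size X -> nth 0 (P ++ X ++ Q) (size P + n) = nth 0 X n.
  by move=> hn; rewrite nth_cat ltnNge leq_addr /= addKn nth_cat hn.
rewrite -!e //; try lia.
by apply: h; rewrite ?size_cat; lia.
Qed.

Lemma avoids213_blocks P X k Y x z : avoids213 (P ++ X ++ k :: Y) ->
  x \in X -> z \in Y -> k < x -> z <= x.
Proof.
move=> + hx hz hkx; case/splitPr: hx => X1 X2; case/splitPr: hz => Y1 Y2 h.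
set w := P ++ (X1 ++ x :: X2) ++ k :: Y1 ++ z :: Y2 in h.
have nth_at (s1 s2 : seq nat) y : w = s1 ++ y :: s2 -> nth 0 w (size s1) = y.
  by move=> ->; rewrite nth_cat ltnn subnn.
have n1 : nth 0 w (size (P ++ X1)) = x.
  by apply: (nth_at _ (X2 ++ k :: Y1 ++ z :: Y2)); rewrite /w -!catA /= -?catA.
have n2 : nth 0 w (size (P ++ X1 ++ x :: X2)) = k.
  by apply: (nth_at _ (Y1 ++ z :: Y2)); rewrite /w -!catA /= -?catA.
have n3 : nth 0 w (size (P ++ X1 ++ x :: X2 ++ k :: Y1)) = z.
  by apply: (nth_at _ Y2); rewrite /w -!catA /= -?catA.
have := h (size (P ++ X1)) (size (P ++ X1 ++ x :: X2)) (size (P ++ X1 ++ x :: X2 ++ k :: Y1)).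
rewrite n1 n2 n3 /w !size_cat /= !size_cat /= => H.
by rewrite leqNgt; apply/negP => hxz; apply: H; lia.
Qed.

Lemma perm_iota_split (A B : seq nat) c :
  perm_eq (A ++ B) (iota c (size A + size B)) ->
  (forall x, x \in A -> forall z, z \in B -> z <= x) ->
  perm_eq B (iota c (size B)) /\ perm_eq A (iota (c + size B) (size A)).
Proof.
move=> hp hle; set n := size A + size B in hp.
have /and3P [uA dAB uB] : [&& uniq A, ~~ has (mem A) B & uniq B].
  by rewrite -cat_uniq (perm_uniq hp) iota_uniq.
have memAB y : (y \in A) || (y \in B) = (c <= y < c + n).
  by rewrite -mem_cat (perm_mem hp) mem_iota.
case: (eqVneq A [::]) => [eA|neA].
  by move: hp; rewrite /n eA cat0s add0n.
set m := min_letter A; have mA : m \in A := mem_min_letter neA.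
have /andP [cm mn] : c <= m < c + n by rewrite -memAB mA.
have memB y : (y \in B) = (c <= y < m).
  apply/idP/idP => [yB|/andP [cy ym]].
    have := memAB y; rewrite yB orbT => /esym /andP [-> _] /=.
    rewrite ltn_neqAle (hle m mA y yB) andbT.
    by apply: contraNneq (hasPn dAB y yB) => ->; exact: mA.
  have := memAB y; rewrite cy (ltn_trans ym mn) /= => /orP [yA|//].
  by have := min_letter_le yA; rewrite -/m leqNgt ym.
have memA y : (y \in A) = (m <= y < c + n).
  apply/idP/idP => [yA|/andP [my yn]].
    by rewrite min_letter_le //; have := memAB y; rewrite yA /= => /esym /andP [].
  by have := memAB y; rewrite memB (leq_trans cm my) yn ltnNge my /= orbF.
have hB : perm_eq B (iota c (m - c)).
  by apply: uniq_perm => // [|y]; rewrite ?iota_uniq // memB mem_iota subnKC.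
have sB : size B = m - c by rewrite (perm_size hB) size_iota.
split; first by rewrite sB.
apply: uniq_perm => // [|y]; rewrite ?iota_uniq // memA mem_iota sB subnKC //.
by have -> : c + n = m + size A by rewrite /n sB; lia.
Qed.

Lemma size_labels u : size (labels u) = ninternal (pi_tree u).
Proof.
elim/ltree_rect_in: u => [|k cs IH] //=; rewrite size_flatten /shape -!map_comp.
by congr (sumn _).+1; apply: eq_map_In.
Qed.

Definition canonical_at (u : ltree) : Prop :=
  forall b, increasing u -> planar (pi_tree u) ->
  perm_eq (labels u) (iota b (size (labels u))) -> avoids213 (word u) ->
  u = canon (pi_tree u) b.

(** The children of a 213-avoiding node carry consecutive label intervals,
    from right to left: the labels of a child dominate those of the children
    to its right. *)
Lemma canon_forest_unique k (cs : seq ltree) P c :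
  (forall u, List.In u cs -> canonical_at u) ->
  all increasing cs -> all planar (map pi_tree cs) ->
  (forall u, List.In u cs -> forall x, x \in labels u -> k < x) ->
  avoids213 (P ++ join_at k (map word cs)) ->
  perm_eq (flatten (map labels cs)) (iota c (size (flatten (map labels cs)))) ->
  canon_forest (map pi_tree cs) c = cs.
Proof.
elim: cs P c => [//|u rest IH] P c Hu /andP [iu irest].
move=> hp hk ha hperm.
have /andP [pu prest] : planar (pi_tree u) && all planar (map pi_tree rest) := hp.
have Hu0 := Hu u (or_introl erefl); have hku := hk u (or_introl erefl).
set A := labels u in hperm; set B := flatten (map labels rest) in hperm.
have hperm' : perm_eq (A ++ B) (iota c (size A + size B)) by rewrite -size_cat.
case: (posnP (size rest)) => [/size0nil rest0|szr].
  subst rest; rewrite /= addn0 -Hu0 //; last by move: ha => /=; exact: avoids213_infix.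
  by move: hperm'; rewrite /B /= !cats0 addn0.
have ha' : avoids213 (P ++ word u ++ k :: join_at k (map word rest)).
  by move: ha; rewrite map_cons join_at_cons; case: (rest) szr.
have blocks x : x \in A -> forall z, z \in B -> z <= x.
  move=> hx z /flattenP [l /mem_map_In [v hv ->] hz].
  apply: (avoids213_blocks ha'); rewrite ?mem_word //; last exact: hku.
  apply: (mem_join_at_in _ (In_mem_map word hv)); rewrite mem_word //.
  exact: (all_In prest (List.in_map _ _ _ hv)).
have [hB hA] := perm_iota_split hperm' blocks.
have eB : size B = ninternal_forest (map pi_tree rest).
  rewrite /B size_flatten /shape -map_comp /ninternal_forest -map_comp.
  by congr sumn; apply: eq_map => v /=; rewrite size_labels.
rewrite map_cons canon_forest_cons -eB -Hu0 //; last exact: avoids213_infix ha'.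
congr (_ :: _); apply: (IH (P ++ word u ++ [:: k])) => //.
- by move=> v hv; apply: Hu; right.
- by move=> v hv; apply: hk; right.
- by move: ha'; rewrite -!catA /=; case: (rest) szr.
Qed.

(** Every increasing 213-avoiding labelling of a planar tree by an interval
    is its canonical labelling: the root carries the smallest label, and the
    children are handled by [canon_forest_unique]. *)
Lemma canon_unique u : canonical_at u.
Proof.
elim/ltree_rect_in: u => [|k cs IH] b //= /andP [hr hic] /andP [hsz hpc] hperm ha.
set L := flatten (map labels cs) in hperm.
have gtk x : x \in L -> k < x.
  case/flattenP => l /mem_map_In [c hc ->].
  exact: labels_above (all_In hic hc) (all_In hr hc) x.
have ekb : k = b.
  have hbk : b <= k.
    have := perm_mem hperm k; rewrite mem_head in_cons mem_iota => /esym.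
    by case/orP => [/eqP ->|/andP [/ltnW]].
  have : b \in k :: L by rewrite (perm_mem hperm) mem_head.
  by rewrite in_cons => /orP [/eqP ->|/gtk]; last rewrite ltnNge hbk.
subst k; congr LNode; symmetry.
apply: (@canon_forest_unique b cs [::]) => //.
- move=> c hc x hx; apply: gtk; apply/flattenP; exists (labels c) => //.
  exact: In_mem_map.
- by rewrite cat0s -word_join_at.
- by rewrite -(perm_cons b).
Qed.

Lemma is_iota_canon t u : is_iota t u -> u = canon t 1.
Proof. by case=> [[hp hperm hi] [<- ha]]; apply: canon_unique. Qed.

Theorem pt_le_pw_le s t us ut : planar s -> pt_le s t ->
  is_iota s us -> is_iota t ut -> pw_le us ut.
Proof.
move=> ps hst /is_iota_canon -> /is_iota_canon ->.
apply: ordered_swaps_pw_le; last exact: ordered_swaps_pt_le.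
by apply: (@packed_range _ (ninternal s)) => x; rewrite mem_word_canon.
Qed.

Theorem mainTheorem8 (u v : ltree) (s t : tree) :
  gsp u -> gsp v -> degree (pi_tree u) = degree (pi_tree v) ->
  planar s -> planar t -> degree s = degree t ->
  (pw_le u v -> pt_le (pi_tree u) (pi_tree v)) /\
  (pt_le s t -> forall us ut : ltree, is_iota s us -> is_iota t ut -> pw_le us ut).
Proof.
move=> gu gv _ ps _ _; split; first exact: pw_le_pt_le.
by move=> hst us ut; apply: pt_le_pw_le.
Qed.
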